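(* Let $\mathcal H$ be a real Hilbert space and $p\ge 2$. Let $J:\mathcal H\to\mathbb R\cup\{\infty\}$ be convex, lower semicontinuous, proper, with dense effective domain, and absolutely $p$-homogeneous ($J(cu)=|c|^pJ(u)$ for all $c\neq0$, $u\in\mathcal H$, and $J(0)=0$), and assume $\lambda_1:=\inf_{u\in\mathcal H_0}\frac{pJ(u)}{\|u\|^p}>0$. Let $f\in\mathcal H_0$ and let $u$ be the solution of the gradient flow $\partial_t u+\partial J(u)\ni 0$, $u(0)=f$. Then the extinction time satisfies $T_{\mathrm{ex}}=\infty$.
   Context: $\langle\cdot,\cdot\rangle$ and $\|\cdot\|$ denote the inner product and norm of $\mathcal H$. The subdifferential is $\partial J(u)=\{\zeta\in\mathcal H: J(u)+\langle\zeta,v-u\rangle\le J(v)\ \forall v\in\mathcal H\}$. $\mathcal N(J)=\{u\in\mathcal H:J(u)=0\}$ is the null-space of $J$ (a closed linear subspace) and $\mathcal H_0:=\mathcal N(J)^\perp\setminus\{0\}$. The gradient flow is understood in Brezis' sense: the unique continuous $u:[0,\infty)\to\mathcal H$, Lipschitz on $[\delta,\infty)$ for every $\delta>0$, right-differentiable on $(0,\infty)$ with $u(0)=f$ and right derivative $\partial_t^+u(t)=-\zeta(t)$, where $\zeta(t)$ is the element of minimal norm of the closed convex set $\partial J(u(t))$. The extinction time is $T_{\mathrm{ex}}:=\inf\{T>0: u(t)=0\ \forall t\ge T\}\in(0,\infty]$. *)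

From HB Require Import structures.
From mathcomp Require Import all_boot all_order all_algebra.
From mathcomp Require Import all_classical all_reals all_analysis.
Set Implicit Arguments. Unset Strict Implicit. Unset Printing Implicit Defensive.
Import Order.TTheory GRing.Theory Num.Theory.
Import numFieldNormedType.Exports.
Local Open Scope classical_set_scope.
Local Open Scope ring_scope.

Section Defs.
Context {R : realType} {V : normedModType R}.

(* [ip] is a real inner product inducing the norm of V (so a complete V
   with such an [ip] is a real Hilbert space). *)
Definition is_inner_product (ip : V -> V -> R) : Prop :=
  [/\ forall x y, ip x y = ip y x,
      forall a x y z, ip (a *: x + y) z = a * ip x z + ip y z &
      forall x, ip x x = `|x| ^+ 2].

Local Open Scope ereal_scope.

Definition convex_fun (J : V -> \bar R) : Prop :=
  forall (u v : V) (t : R), (0 <= t <= 1)%R ->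
    J (t *: u + (1 - t) *: v)%R <= t%:E * J u + (1 - t)%:E * J v.

Definition proper_fun (J : V -> \bar R) : Prop :=
  (forall u, J u != -oo) /\ (exists u, J u != +oo).

Definition eff_dom (J : V -> \bar R) : set V := [set u | J u < +oo].

Definition dense_eff_dom (J : V -> \bar R) : Prop := closure (eff_dom J) = setT.

Definition abs_homogeneous (p : R) (J : V -> \bar R) : Prop :=
  (forall (c : R) (u : V), c != 0%R -> J (c *: u)%R = (`|c| `^ p)%:E * J u)
  /\ J (0%R : V) = 0.

Definition null_space (J : V -> \bar R) : set V := [set u | J u = 0].

Definition H0 (ip : V -> V -> R) (J : V -> \bar R) : set V :=
  [set v | (forall w, null_space J w -> ip v w = 0%R) /\ v != (0%R : V)].

Definition lambda1 (ip : V -> V -> R) (p : R) (J : V -> \bar R) : \bar R :=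
  ereal_inf [set (p / (`|u| `^ p))%:E * J u | u in H0 ip J].

Definition subdiff (ip : V -> V -> R) (J : V -> \bar R) (u : V) : set V :=
  [set z | forall v, J u + (ip z (v - u)%R)%:E <= J v].

Definition min_norm_subgrad (ip : V -> V -> R) (J : V -> \bar R) (u z : V) : Prop :=
  subdiff ip J u z /\ (forall w, subdiff ip J u w -> (`|z| <= `|w|)%R).

Local Close Scope ereal_scope.

(* Brezis solution of the gradient flow  u' + dJ(u) \ni 0, u(0) = f *)
Definition gradient_flow (ip : V -> V -> R) (J : V -> \bar R) (f : V)
    (u : R -> V) : Prop :=
  [/\ u 0 = f,
      {within [set t : R | 0 <= t], continuous u},
      (forall delta : R, 0 < delta -> exists L : R,
          forall s t, delta <= s -> delta <= t -> `|u s - u t| <= L * `|s - t|) &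
      (forall t : R, 0 < t -> exists z : V,
          min_norm_subgrad ip J (u t) z /\
          h^-1 *: (u (t + h) - u t) @[h --> 0^'+] --> - z)].

Definition extinction_time (u : R -> V) : \bar R :=
  ereal_inf [set T%:E | T in [set T : R | 0 < T /\ forall t, T <= t -> u t = 0]].

End Defs.

From HB Require Import structures.
From mathcomp Require Import all_boot all_order all_algebra.
From mathcomp Require Import all_classical all_reals all_analysis.
From mathcomp Require Import ring lra.
Import Order.TTheory GRing.Theory Num.Theory.
Import numFieldNormedType.Exports.
Local Open Scope classical_set_scope.
Local Open Scope ring_scope.

(* Along the flow, [|u|^2] has right derivative [-2 <zeta, u>], and for
   [zeta \in \partial J(u)] the absolute [p]-homogeneity of [J] gives
   [2 J(u) <= <zeta, u> <= (2^p - 1) J(u)]; the lower bound needs [p >= 2].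
   With Cauchy-Schwarz it makes the Rayleigh quotient [J(u) / |u|^2]
   nonincreasing while [u] does not vanish, so [|u|^2] decays at most
   exponentially and cannot reach [0] in finite time; since [u] is nonzero
   right after [t = 0], it never vanishes.  As only right derivatives are
   available, monotonicity is obtained from lower right Dini derivatives. *)

Section real_analysis.
Context {R : realType}.

Lemma near_at_right0_ex {P : R -> Prop} :
  (\forall h \near 0^'+, P h) -> forall h0, 0 < h0 -> exists h, 0 < h < h0 /\ P h.
Proof.
move=> hP h0 h0_gt0.
have : \forall h \near (0 : R)^'+, (0 < h < h0) /\ P h.
  near=> h; split; last by near: h.
  by apply/andP; split; near: h; [exact: nbhs_right_gt | exact: nbhs_right_lt].
by move=> /filter_ex[h hh]; exists h.
Unshelve. all: by end_near. Qed.

Lemma near_at_right0_ball {P : R -> Prop} :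
  (\forall h \near 0^'+, P h) -> exists2 r, 0 < r & forall h, 0 < h < r -> P h.
Proof.
rewrite near_withinE => /nbhs_ballP[r r_gt0 hr]; exists r => // h /andP[h_gt0 hr'].
by apply: hr => //; rewrite /ball /= sub0r normrN gtr0_norm.
Qed.

Lemma cvg_at_right0_shift {T : topologicalType} {f : R -> T} {x : R} :
  {for x, continuous f} -> f (x + h) @[h --> 0^'+] --> f x.
Proof.
move=> fx; have shift : x + h @[h --> (0 : R)^'+] --> x.
  rewrite -[X in _ --> X]addr0; apply: cvgD; first exact: cvg_cst.
  by apply: cvg_at_right_filter; exact: cvg_id.
exact: cvg_comp shift fx.
Qed.

Lemma lipschitz_continuous_at {V : normedModType R} (f : R -> V) (d L x : R) :
  (forall s t, d <= s -> d <= t -> `|f s - f t| <= L * `|s - t|) ->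
  d < x -> {for x, continuous f}.
Proof.
move=> f_lip dx; apply/cvgrPdist_lt => e e_gt0.
have L1_gt0 : 0 < `|L| + 1 by rewrite ltr_wpDl.
near=> y.
have dy : d <= y by apply: ltW; near: y; exact: lt_nbhsr.
have xy : `|x - y| < e / (`|L| + 1).
  by near: y; apply: (cvgrPdist_lt _ _).1 cvg_id _ (divr_gt0 e_gt0 L1_gt0).
apply: le_lt_trans (f_lip _ _ (ltW dx) dy) _.
rewrite -(ltr_pM2l L1_gt0) mulrCA divff ?gt_eqF // mulr1 in xy.
apply: le_lt_trans xy; rewrite ler_wpM2r // (le_trans (ler_norm L)) // lerDl.
Unshelve. all: by end_near. Qed.

Definition lower_right_dini_nonpos (phi : R -> R) (x : R) : Prop :=
  forall e, 0 < e -> forall h0, 0 < h0 ->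
    exists h, 0 < h < h0 /\ phi (x + h) <= phi x + e * h.

Lemma near_lower_right_dini_nonpos (phi : R -> R) (x : R) :
  (forall e, 0 < e -> \forall h \near 0^'+, phi (x + h) <= phi x + e * h) ->
  lower_right_dini_nonpos phi x.
Proof. by move=> near_le e e_gt0; apply: near_at_right0_ex; exact: near_le. Qed.

Lemma dini_nonincreasing (phi : R -> R) (a b : R) : a <= b ->
  (forall x, a <= x <= b -> {for x, continuous phi}) ->
  (forall x, a <= x < b -> lower_right_dini_nonpos phi x) ->
  phi b <= phi a.
Proof.
move=> ab phi_cont phi_dini; rewrite leNgt; apply/negP => phi_ab.
have {}ab : a < b by rewrite lt_neqAle ab andbT; apply: contraTneq phi_ab => ->; rewrite ltxx.
pose e := (phi b - phi a) / (2 * (b - a)).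
have e_gt0 : 0 < e by rewrite divr_gt0 ?mulr_gt0 // subr_gt0.
pose psi x := phi x - phi a - e * (x - a).
have psi_b : 0 < psi b.
  have -> : psi b = (phi b - phi a) / 2 by rewrite /psi /e; field; rewrite subr_eq0 gt_eqF.
  by rewrite divr_gt0 // subr_gt0.
pose S := [set x | a <= x <= b /\ psi x <= 0].
have Sa : S a by split; [rewrite lexx ltW | rewrite /psi !subrr mulr0 subrr].
have S_sup : has_sup S by split; [exists a | exists b => x [/andP[_ ->]]].
pose c := sup S.
have ac : a <= c by exact: sup_upper_bound.
have cb : c <= b by apply: ge_sup; [exists a | move=> x [/andP[_ ->]]].
have psi_c : psi c <= 0.
  rewrite leNgt; apply/negP => psi_c_gt0.
  have psi_cont : {for c, continuous psi}.
    apply: cvgB; first by apply: cvgB; [apply: phi_cont; rewrite ac cb | exact: cvg_cst].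
    by apply: cvgM; [exact: cvg_cst | apply: cvgB; [exact: cvg_id | exact: cvg_cst]].
  have [s [[_ psi_s] psi_s_gt0]] := closure_sup S_sup.1 S_sup.2 (cvgr_gt _ psi_cont _ psi_c_gt0).
  by move: psi_s; rewrite leNgt psi_s_gt0.
have cb' : c < b by rewrite lt_neqAle cb andbT; apply: contraTneq psi_c => ->; rewrite -ltNge.
have acb : a <= c < b by rewrite ac cb'.
have bc_gt0 : 0 < b - c by rewrite subr_gt0.
have [h [/andP[h_gt0 hbc] phi_h]] := phi_dini c acb e e_gt0 (b - c) bc_gt0.
have : S (c + h).
  split; last by rewrite /psi; move: psi_c phi_h; rewrite /psi; lra.
  by apply/andP; split; [apply: le_trans ac _; rewrite lerDl ltW | rewrite -lerBrDl ltW].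
by move/(sup_upper_bound S_sup); rewrite -/c gerDl leNgt h_gt0.
Qed.

Lemma right_deriv_le_le (phi : R -> R) (a b K : R) : a <= b ->
  (forall x, a <= x <= b -> {for x, continuous phi}) ->
  (forall x, a <= x < b ->
     exists2 l, h^-1 * (phi (x + h) - phi x) @[h --> 0^'+] --> l & l <= K) ->
  phi b <= phi a + K * (b - a).
Proof.
move=> ab phi_cont phi_deriv; pose psi x := phi x - K * x.
suff : psi b <= psi a by rewrite /psi; lra.
apply: dini_nonincreasing => // [x xab | x xab].
  apply: cvgB; first exact: phi_cont.
  by apply: cvgM; [exact: cvg_cst | exact: cvg_id].
have [l phi_l lK] := phi_deriv x xab.
apply: near_lower_right_dini_nonpos => e e_gt0.
have lKe : l < K + e by lra.
near=> h.
have h_gt0 : 0 < h by near: h; exact: nbhs_right_gt.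
have : h^-1 * (phi (x + h) - phi x) < K + e by near: h; exact: cvgr_lt phi_l _ lKe.
rewrite -(ltr_pM2l h_gt0) mulrA mulfV ?gt_eqF // mul1r /psi; lra.
Unshelve. all: by end_near. Qed.

Lemma right_deriv_ge_ge (phi : R -> R) (a b K : R) : a <= b ->
  (forall x, a <= x <= b -> {for x, continuous phi}) ->
  (forall x, a <= x < b ->
     exists2 l, h^-1 * (phi (x + h) - phi x) @[h --> 0^'+] --> l & K <= l) ->
  phi a + K * (b - a) <= phi b.
Proof.
move=> ab phi_cont phi_deriv.
suff : - phi b <= - phi a + - K * (b - a) by lra.
apply: (@right_deriv_le_le (fun x => - phi x)) => // [x xab | x xab].
  by apply: cvgN; exact: phi_cont.
have [l phi_l Kl] := phi_deriv x xab; exists (- l); last by rewrite lerN2.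
by under eq_fun do rewrite -opprD mulrN; exact: cvgN.
Qed.

Lemma first_root (g : R -> R) (a t : R) :
  (forall x, a <= x -> {for x, continuous g}) -> g a != 0 -> a <= t -> g t = 0 ->
  exists T, [/\ a < T, g T = 0 & forall x, a <= x < T -> g x != 0].
Proof.
move=> g_cont ga_neq0 a_t gt0.
pose Z := [set s | a <= s /\ g s = 0].
have Z_inf : has_inf Z by split; [exists t | exists a => s []].
have aT : a <= inf Z by apply: lb_le_inf; [exists t | move=> s []].
have gT : g (inf Z) = 0.
  apply/eqP; apply: contraT => gT_neq0.
  have : \forall y \near inf Z, 0 < `|g y|.
    by apply: (cvgr_gt _ (cvg_norm (g_cont _ aT))); rewrite normr_gt0.
  move=> /nbhs_ballP[r r_gt0 near_T].
  have [s [a_s gs] sT] := inf_adherent r_gt0 Z_inf.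
  have Ts : inf Z <= s := ge_inf Z_inf.2 (conj a_s gs).
  suff : 0 < `|g s| by rewrite gs normr0 ltxx.
  by apply: near_T; rewrite /ball /= ler0_norm ?subr_le0 // opprB; lra.
exists (inf Z); split => //.
  by rewrite lt_neqAle aT andbT; apply: contraNneq ga_neq0 => ->; rewrite gT.
move=> x /andP[ax xT]; apply/eqP => gx.
by have := ge_inf Z_inf.2 (conj ax gx); rewrite leNgt xT.
Qed.

Lemma near_at_right0_neq0 {V : normedModType R} (f : R -> V) :
  {within [set t | 0 <= t], continuous f} -> f 0 != 0 -> \forall t \near 0^'+, f t != 0.
Proof.
move=> f_cont f0_neq0; have ge0_0 : [set t : R | 0 <= t] 0 by rewrite /= lexx.
have f_lim : f t @[t --> within [set t : R | 0 <= t] (nbhs 0)] --> f 0.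
  move: f_cont; rewrite continuous_subspace_in => /(_ 0 (mem_set ge0_0)).
  by rewrite (nbhs_subspace_in ge0_0).
have : \forall t \near within [set t : R | 0 <= t] (nbhs 0), 0 < `|f t|.
  by apply: (cvgr_gt _ (cvg_norm f_lim)); rewrite normr_gt0.
rewrite !near_withinE; apply: filterS => t ft_gt0 t_gt0.
by rewrite -normr_gt0; apply: ft_gt0; exact: ltW.
Qed.
End real_analysis.

Section inner_product.
Context {R : realType} {V : normedModType R} {ip : V -> V -> R}.
Hypothesis ip_inner : is_inner_product ip.

Lemma ipC x y : ip x y = ip y x.
Proof. by case: ip_inner. Qed.

Lemma ipxx x : ip x x = `|x| ^+ 2.
Proof. by case: ip_inner. Qed.

Lemma ipDl x y z : ip (x + y) z = ip x z + ip y z.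
Proof. by case: ip_inner => _ ip_lin _; rewrite -[x in LHS]scale1r ip_lin mul1r. Qed.

Lemma ipZl a x z : ip (a *: x) z = a * ip x z.
Proof.
case: ip_inner => _ ip_lin _.
have ip0 : ip 0 z = 0 by have := ipDl 0 0 z; rewrite addr0; lra.
by rewrite -[a *: x]addr0 ip_lin ip0 addr0.
Qed.

Lemma ipNl x z : ip (- x) z = - ip x z.
Proof. by rewrite -scaleN1r ipZl mulN1r. Qed.

Lemma ipBl x y z : ip (x - y) z = ip x z - ip y z.
Proof. by rewrite ipDl ipNl. Qed.

Lemma ipDr x y z : ip z (x + y) = ip z x + ip z y.
Proof. by rewrite ipC ipDl ![ip _ z]ipC. Qed.

Lemma ipZr a x z : ip z (a *: x) = a * ip z x.
Proof. by rewrite ipC ipZl ipC. Qed.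

Lemma ipNr x z : ip z (- x) = - ip z x.
Proof. by rewrite ipC ipNl ipC. Qed.

Lemma ipBr x y z : ip z (x - y) = ip z x - ip z y.
Proof. by rewrite ipDr ipNr. Qed.

Lemma ip_polarization x y : ip x y = (`|x + y| ^+ 2 - `|x| ^+ 2 - `|y| ^+ 2) / 2.
Proof. by rewrite -!ipxx ipDl !ipDr (ipC y x); field. Qed.

Lemma cauchy_schwarz x y : ip x y <= `|x| * `|y|.
Proof.
have xy_le : `|x + y| ^+ 2 <= (`|x| + `|y|) ^+ 2.
  by rewrite ler_sqr ?nnegrE ?addr_ge0 // ler_normD.
by rewrite ip_polarization ler_pdivrMr //; move: xy_le; rewrite !expr2; lra.
Qed.

Lemma cvg_ip {T : Type} {F : set_system T} {FF : Filter F} {f g : T -> V} {a b} :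
  f @ F --> a -> g @ F --> b -> (fun t => ip (f t) (g t)) @ F --> ip a b.
Proof.
move=> fa gb; rewrite ip_polarization.
under eq_fun do rewrite ip_polarization !expr2.
apply: cvgM; last exact: cvg_cst.
by rewrite !expr2; apply: cvgB; [apply: cvgB|]; apply: cvgM; apply: cvg_norm => //; apply: cvgD.
Qed.

Section abs_homogeneous_convex.
Context {p : R} {J : V -> \bar R}.
Hypotheses (p_ge2 : 2 <= p)
  (J_convex : convex_fun J) (J_proper : proper_fun J) (J_hom : abs_homogeneous p J).

Lemma abs_homogeneousZ {c x y} : c != 0 -> J x = y%:E -> J (c *: x) = (`|c| `^ p * y)%:E.
Proof. by move=> c_neq0 Jx; rewrite J_hom.1 // Jx. Qed.

Lemma abs_homogeneousN x : J (- x) = J x.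
Proof. by rewrite -scaleN1r J_hom.1 ?oppr_eq0 ?oner_eq0 // normrN normr1 powR1 mul1e. Qed.

Lemma abs_homogeneous_ge0 {x y} : J x = y%:E -> 0 <= y.
Proof.
move=> Jx; have half01 : 0 <= (2^-1 : R) <= 1 by rewrite invr_ge0 invf_le1 // ?ler0n ?ler1n.
have := J_convex x (- x) _ half01.
have -> : (1 - 2^-1 : R) = 2^-1 by field.
by rewrite scalerN subrr J_hom.2 abs_homogeneousN Jx -EFinD lee_fin; lra.
Qed.

Lemma subdiff_fin {x z} : subdiff ip J x z -> exists y, J x = y%:E.
Proof.
case: J_proper => J_ninfty [v Jv] /(_ v).
move: (J_ninfty x) Jv; case: (J x) => [y _ _ _|_|//]; first by exists y.
by case: (J v).
Qed.

Lemma subdiff_le {x z y v w} :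
  subdiff ip J x z -> J x = y%:E -> J v = w%:E -> y + ip z (v - x) <= w.
Proof. by move=> /(_ v); rewrite -lee_fin EFinD => + <- <-. Qed.

Lemma subdiff_ip_le {x z y} :
  subdiff ip J x z -> J x = y%:E -> ip z x <= (2 `^ p - 1) * y.
Proof.
move=> zJx Jx; have two_neq0 : (2 : R) != 0 by [].
have := subdiff_le zJx Jx (abs_homogeneousZ two_neq0 Jx).
by rewrite scalerDl scale1r addrK ger0_norm //; lra.
Qed.

(* At [c *: x] with [0 < c < 1] the subgradient inequality gives
   [(1 + c) * y <= ip z x], as [c `^ p <= c ^+ 2]; the choice
   [c := ip z x / (2 * y)] then rules out [ip z x < 2 * y]. *)
Lemma subdiff_ip_ge {x z y} :
  subdiff ip J x z -> J x = y%:E -> 2 * y <= ip z x.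
Proof.
move=> zJx Jx; have y_ge0 := abs_homogeneous_ge0 Jx.
have lb c : 0 < c < 1 -> (1 + c) * y <= ip z x.
  move=> /andP[c_gt0 c_lt1].
  have := subdiff_le zJx Jx (abs_homogeneousZ (lt0r_neq0 c_gt0) Jx).
  rewrite -{2}[x]scale1r -scalerBl ipZr ger0_norm ?(ltW c_gt0) //.
  have cp_le : c `^ p <= c * c.
    have c01 : 0 < c <= 1 by rewrite c_gt0 ltW.
    by rewrite -expr2 -powR_mulrn ?(ltW c_gt0) //; exact: (ger_powR c01 p_ge2).
  have : c `^ p * y <= c * c * y by rewrite ler_wpM2r.
  move=> cpy_le ineq; have c1_gt0 : 0 < 1 - c by rewrite subr_gt0.
  by rewrite -(ler_pM2l c1_gt0); lra.
rewrite leNgt; apply/negP => ip_lt.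
have half_in : 0 < (2^-1 : R) < 1 by rewrite invr_gt0 invf_lt1 // ?ltr0n ?ltr1n.
have ip_ge := lb _ half_in.
have y_gt0 : 0 < y by lra.
have c_in : 0 < ip z x / (2 * y) < 1.
  by rewrite divr_gt0 ?ltr_pdivrMr ?mulr_gt0 //=; lra.
have := lb _ c_in; have -> : (1 + ip z x / (2 * y)) * y = y + ip z x / 2.
  by field; rewrite gt_eqF.
lra.
Qed.

Section gradient_flow.
Context {u : R -> V}.

Definition dq t h := h^-1 *: (u (t + h) - u t).

Hypothesis u_rderiv : forall t, 0 < t ->
  exists z, subdiff ip J (u t) z /\ dq t h @[h --> 0^'+] --> - z.

Context {d L : R}.
Hypotheses (d_gt0 : 0 < d)
  (u_lip : forall s t, d <= s -> d <= t -> `|u s - u t| <= L * `|s - t|).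

Definition zeta t :=
  xget 0 [set z | subdiff ip J (u t) z /\ dq t h @[h --> 0^'+] --> - z].

Lemma zetaP {t} : 0 < t ->
  subdiff ip J (u t) (zeta t) /\ dq t h @[h --> 0^'+] --> - zeta t.
Proof.
move=> t_gt0; rewrite /zeta; case: xgetP => // none.
by have [z z_ok] := u_rderiv _ t_gt0; have := none z.
Qed.

Definition energy t := fine (J (u t)).
Definition sqnorm t := `|u t| ^+ 2.
Definition rayleigh t := energy t / sqnorm t.

Lemma sqnorm_gt0 t : (0 < sqnorm t) = (u t != 0).
Proof. by rewrite /sqnorm lt0r sqrf_eq0 normr_eq0 sqr_ge0 andbT. Qed.

Lemma energyE {t} : 0 < t -> J (u t) = (energy t)%:E.
Proof. by move=> /zetaP[/subdiff_fin[y Jy] _]; rewrite /energy Jy. Qed.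

Lemma energy_ge0 {t} : 0 < t -> 0 <= energy t.
Proof. by move=> /energyE; apply: abs_homogeneous_ge0. Qed.

Lemma zeta_ip_bounds {t} : 0 < t ->
  2 * energy t <= ip (zeta t) (u t) <= (2 `^ p - 1) * energy t.
Proof.
move=> t_gt0; have [zJ _] := zetaP t_gt0; have Ju := energyE t_gt0.
by rewrite (subdiff_ip_ge zJ Ju) (subdiff_ip_le zJ Ju).
Qed.

Lemma energy_incr_le {t h} : 0 < t -> 0 < h ->
  energy (t + h) - energy t <= h * ip (zeta (t + h)) (dq t h).
Proof.
move=> t_gt0 h_gt0; have th_gt0 : 0 < t + h by rewrite addr_gt0.
have := subdiff_le (zetaP th_gt0).1 (energyE th_gt0) (energyE t_gt0).
rewrite /dq -ipZr scalerA mulfV ?gt_eqF // scale1r !ipBr; lra.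
Qed.

Lemma norm_zeta_le {t} : d <= t -> `|zeta t| <= L.
Proof.
move=> dt; have t_gt0 : 0 < t := lt_le_trans d_gt0 dt.
rewrite -normrN; apply: cvgr_to_le (cvg_norm (zetaP t_gt0).2) _.
near=> h; have h_gt0 : 0 < h by near: h; exact: nbhs_right_gt.
have dth : d <= t + h by rewrite (le_trans dt) // lerDl ltW.
rewrite /dq normrZ gtr0_norm ?invr_gt0 // ler_pdivrMl //.
by rewrite mulrC; have := u_lip _ _ dth dt; rewrite addrAC subrr add0r gtr0_norm.
Unshelve. all: by end_near. Qed.

Lemma u_continuous {t} : d < t -> {for t, continuous u}.
Proof. exact: lipschitz_continuous_at u_lip. Qed.

Lemma energy_lipschitz s t : d <= s -> d <= t ->
  `|energy s - energy t| <= L * L * `|s - t|.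
Proof.
have half_le s' t' : d <= s' -> d <= t' -> energy s' - energy t' <= L * L * `|s' - t'|.
  move=> ds dt; have s_gt0 := lt_le_trans d_gt0 ds; have t_gt0 := lt_le_trans d_gt0 dt.
  have := subdiff_le (zetaP s_gt0).1 (energyE s_gt0) (energyE t_gt0).
  have := cauchy_schwarz (zeta s') (u s' - u t').
  have zeta_le := norm_zeta_le ds.
  have := ler_pM (normr_ge0 _) (normr_ge0 _) zeta_le (u_lip _ _ ds dt).
  rewrite !ipBr -mulrA; lra.
move=> ds dt; rewrite ler_norml half_le // andbT lerNl opprB distrC; exact: half_le.
Qed.

Lemma energy_continuous {t} : d < t -> {for t, continuous energy}.
Proof. exact: lipschitz_continuous_at energy_lipschitz. Qed.

Lemma sqnorm_continuous {t} : d < t -> {for t, continuous sqnorm}.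
Proof.
move=> dt; have -> : sqnorm = fun s => `|u s| * `|u s| by apply/funext => s; exact: expr2.
by apply: cvgM; apply: cvg_norm; exact: u_continuous.
Qed.

Lemma rayleigh_continuous {t} : d < t -> 0 < sqnorm t -> {for t, continuous rayleigh}.
Proof.
move=> dt sqn_gt0; apply: cvgM; first exact: energy_continuous.
by apply: cvgV; [exact: lt0r_neq0 | exact: sqnorm_continuous].
Qed.

Lemma ip_u_rderiv {t} a : 0 < t ->
  h^-1 * (ip a (u (t + h)) - ip a (u t)) @[h --> 0^'+] --> - ip a (zeta t).
Proof.
move=> t_gt0; under eq_fun do rewrite -ipBr -ipZr.
by rewrite -ipNr; apply: cvg_ip; [exact: cvg_cst | exact: (zetaP t_gt0).2].
Qed.

Lemma sqnorm_rderiv {t} : d < t ->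
  h^-1 * (sqnorm (t + h) - sqnorm t) @[h --> 0^'+] --> - (2 * ip (zeta t) (u t)).
Proof.
move=> dt; have t_gt0 := lt_trans d_gt0 dt.
have -> : - (2 * ip (zeta t) (u t)) = ip (- zeta t) (u t + u t).
  by rewrite ipNl ipDr; ring.
have sqnorm_dq h : h^-1 * (sqnorm (t + h) - sqnorm t) = ip (dq t h) (u (t + h) + u t).
  by rewrite /dq /sqnorm ipZl ipBl !ipDr -!ipxx (ipC (u t)); ring.
under eq_fun do rewrite sqnorm_dq.
apply: cvg_ip; first exact: (zetaP t_gt0).2.
by apply: cvgD; [exact: cvg_at_right0_shift (u_continuous dt) | exact: cvg_cst].
Qed.

(* A weak right continuity of [zeta]: for small [h > 0], [zeta (tau + h)] cannot
   stay in a half-space [ip _ (zeta tau) < |zeta tau|^2 - eta], since [- zeta]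
   is the right derivative of [u], both at [tau] and after it. *)
Lemma zeta_ip_limsup {tau eta} : d < tau -> 0 < eta ->
  ~ \forall h \near 0^'+, ip (zeta (tau + h)) (zeta tau) < `|zeta tau| ^+ 2 - eta.
Proof.
move=> dtau eta_gt0 /near_at_right0_ball[r r_gt0 zeta_lt].
have tau_gt0 := lt_trans d_gt0 dtau.
set a := zeta tau in zeta_lt *; set c := `|a| ^+ 2 - eta in zeta_lt.
pose q s := ip a (u s) + c * s.
have q_cont s : d < s -> {for s, continuous q}.
  move=> ds; apply: cvgD; last by apply: cvgM; [exact: cvg_cst | exact: cvg_id].
  by apply: cvg_ip; [exact: cvg_cst | exact: u_continuous].
have q_le s s' : tau < s -> s <= s' -> s' < tau + r -> q s <= q s'.
  move=> tau_s ss' s'r; have := @right_deriv_ge_ge _ q s s' 0 ss'; rewrite mul0r addr0.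
  apply=> [x /andP[sx _]|x /andP[sx xs']]; first by apply: q_cont; lra.
  have x_gt0 : 0 < x by lra.
  exists (- ip a (zeta x) + c); last first.
    have := zeta_lt (x - tau); rewrite subrKC ipC; lra.
  apply: cvg_trans (near_eq_cvg _) (cvgD (ip_u_rderiv a x_gt0) (cvg_cst c)).
  near=> h; have h_neq0 : h != 0 by apply: lt0r_neq0; near: h; exact: nbhs_right_gt.
  by rewrite /q fctE; field.
have q_tau s : tau < s < tau + r -> q tau <= q s.
  move=> /andP[tau_s s_r]; apply: cvgr_to_le (cvg_at_right0_shift (q_cont _ dtau)) _.
  near=> h; have h_gt0 : 0 < h by near: h; exact: nbhs_right_gt.
  have h_lt : h < s - tau by near: h; apply: nbhs_right_lt; rewrite subr_gt0.
  by apply: q_le; lra.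
have dq_a : ip a (dq tau h) @[h --> 0^'+] --> ip a (- a).
  by apply: cvg_ip; [exact: cvg_cst | exact: (zetaP tau_gt0).2].
suff : - c <= ip a (- a) by rewrite ipNr ipxx /c; lra.
apply: cvgr_to_ge dq_a _; near=> h.
have h_gt0 : 0 < h by near: h; exact: nbhs_right_gt.
have h_lt : h < r by near: h; exact: nbhs_right_lt.
have := q_tau (tau + h); rewrite ltrDl h_gt0 ltrD2l h_lt => /(_ isT).
rewrite /dq ipZr ipBr /q => q_le_h.
by rewrite -(ler_pM2l h_gt0) mulrA mulfV ?gt_eqF // mul1r; lra.
Unshelve. all: by end_near. Qed.

Lemma energy_ip_zeta_le {t} : 0 < t ->
  2 * energy t * ip (zeta t) (u t) <= `|zeta t| ^+ 2 * sqnorm t.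
Proof.
move=> t_gt0; have /andP[E_le _] := zeta_ip_bounds t_gt0.
have P_ge0 : 0 <= ip (zeta t) (u t) by have := energy_ge0 t_gt0; lra.
have CS := ler_pM P_ge0 P_ge0 (cauchy_schwarz (zeta t) (u t)) (cauchy_schwarz (zeta t) (u t)).
have := ler_wpM2r P_ge0 E_le; rewrite /sqnorm; nra.
Qed.

Lemma rayleigh_incr_le {tau h} : d <= tau -> 0 < h -> 0 < sqnorm tau -> 0 < sqnorm (tau + h) ->
  (rayleigh (tau + h) - rayleigh tau) * (sqnorm tau * sqnorm (tau + h)) <=
  h * ((L * `|dq tau h + zeta tau| - ip (zeta (tau + h)) (zeta tau)) * sqnorm tau
       - energy tau * (h^-1 * (sqnorm (tau + h) - sqnorm tau))).
Proof.
move=> dtau h_gt0 G_gt0 G'_gt0; have tau_gt0 := lt_le_trans d_gt0 dtau.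
have dtauh : d <= tau + h by rewrite (le_trans dtau) // lerDl ltW.
have zeta_dq_le : ip (zeta (tau + h)) (dq tau h) <=
    L * `|dq tau h + zeta tau| - ip (zeta (tau + h)) (zeta tau).
  rewrite -[X in ip _ X](addrK (zeta tau)) ipBr lerD2r.
  exact: le_trans (cauchy_schwarz _ _) (ler_wpM2r (normr_ge0 _) (norm_zeta_le dtauh)).
have := energy_incr_le tau_gt0 h_gt0.
rewrite /rayleigh; set G := sqnorm tau; set G' := sqnorm (tau + h).
set E := energy tau; set E' := energy (tau + h).
set X := L * `|dq tau h + zeta tau| - _ => E_incr.
have {}E_incr : E' - E <= h * X := le_trans E_incr (ler_wpM2l (ltW h_gt0) zeta_dq_le).
have -> : (E' / G' - E / G) * (G * G') = (E' - E) * G - E * (G' - G).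
  by field; rewrite !gt_eqF.
have -> : h * (X * G - E * (h^-1 * (G' - G))) = h * X * G - E * (G' - G).
  by field; rewrite gt_eqF.
by rewrite lerD2r (ler_wpM2r (ltW G_gt0)).
Qed.

(* For the arbitrarily small [h] provided by [zeta_ip_limsup], [rayleigh_incr_le]
   bounds the increment of the quotient by [h * (F h + e * G * G')], and [F h]
   has a negative limit because [2 * E * P <= |A| ^+ 2 * G]. *)
Lemma rayleigh_dini {tau} : d < tau -> 0 < sqnorm tau ->
  lower_right_dini_nonpos rayleigh tau.
Proof.
move=> dtau G_gt0 e e_gt0 h0 h0_gt0; have tau_gt0 := lt_trans d_gt0 dtau.
have EP_le := energy_ip_zeta_le tau_gt0.
set A := zeta tau in EP_le *; set G := sqnorm tau in G_gt0 EP_le *.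
set E := energy tau in EP_le *; set P := ip A (u tau) in EP_le.
pose eta := e * G / 2.
have eta_gt0 : 0 < eta by rewrite /eta; apply: divr_gt0 => //; exact: mulr_gt0.
pose F h := (L * `|dq tau h + A| - (`|A| ^+ 2 - eta)) * G
  - E * (h^-1 * (sqnorm (tau + h) - G)) - e * G * sqnorm (tau + h).
have F_lim : F h @[h --> 0^'+] -->
    (L * 0 - (`|A| ^+ 2 - eta)) * G - E * - (2 * P) - e * G * G.
  apply: cvgB; first apply: cvgB.
  - apply: cvgM; last exact: cvg_cst.
    apply: cvgB; last exact: cvg_cst.
    apply: cvgM; first exact: cvg_cst.
    rewrite -[X in _ --> X](normr0 V) -(addNr A); apply: cvg_norm.
    by apply: cvgD; [exact: (zetaP tau_gt0).2 | exact: cvg_cst].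
  - by apply: cvgM; [exact: cvg_cst | exact: sqnorm_rderiv].
  - by apply: cvgM; [exact: cvg_cst | exact: cvg_at_right0_shift (sqnorm_continuous dtau)].
have F_lim_lt0 : (L * 0 - (`|A| ^+ 2 - eta)) * G - E * - (2 * P) - e * G * G < 0.
  have : eta * G = e * G * G / 2 by rewrite /eta; field.
  have : 0 < e * G * G by do 2 apply: mulr_gt0 => //.
  lra.
apply: contrapT => no_h; apply: (zeta_ip_limsup dtau eta_gt0).
near=> h; rewrite ltNge; apply/negP => zeta_ge; apply: no_h; exists h.
have h_gt0 : 0 < h by near: h; exact: nbhs_right_gt.
split; first by rewrite h_gt0 /=; near: h; exact: nbhs_right_lt.
have G'_gt0 : 0 < sqnorm (tau + h).
  by near: h; apply: cvgr_gt (cvg_at_right0_shift (sqnorm_continuous dtau)) _ G_gt0.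
have F_lt0 : F h < 0 by near: h; exact: cvgr_lt F_lim _ F_lim_lt0.
have Y_le : (L * `|dq tau h + A| - ip (zeta (tau + h)) A) * G
    - E * (h^-1 * (sqnorm (tau + h) - G)) <= e * G * sqnorm (tau + h).
  have : L * `|dq tau h + A| - ip (zeta (tau + h)) A <= L * `|dq tau h + A| - (`|A| ^+ 2 - eta).
    by lra.
  by move/(ler_wpM2r (ltW G_gt0)); rewrite /F in F_lt0; lra.
have := le_trans (rayleigh_incr_le (ltW dtau) h_gt0 G_gt0 G'_gt0) (ler_wpM2l (ltW h_gt0) Y_le).
have -> : h * (e * G * sqnorm (tau + h)) = e * h * (G * sqnorm (tau + h)) by ring.
by rewrite ler_pM2r ?(mulr_gt0 G_gt0 G'_gt0) //; lra.
Unshelve. all: by end_near. Qed.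

Lemma rayleigh_nonincreasing {a t} : d < a -> a <= t ->
  (forall x, a <= x <= t -> 0 < sqnorm x) -> rayleigh t <= rayleigh a.
Proof.
move=> da a_t g_gt0; apply: dini_nonincreasing => // x /andP[ax xt].
  by apply: rayleigh_continuous; [exact: lt_le_trans ax | rewrite g_gt0 ?ax].
by apply: rayleigh_dini; [exact: lt_le_trans ax | rewrite g_gt0 ?ax ?ltW].
Qed.

Lemma sqnorm_nonincreasing {a t} : d < a -> a <= t -> sqnorm t <= sqnorm a.
Proof.
move=> da a_t; have := @right_deriv_le_le _ sqnorm a t 0 a_t; rewrite mul0r addr0.
apply=> [x /andP[ax _]|x /andP[ax _]]; first by apply: sqnorm_continuous; exact: lt_le_trans ax.
have dx : d < x := lt_le_trans da ax; have x_gt0 := lt_trans d_gt0 dx.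
exists (- (2 * ip (zeta x) (u x))); first exact: sqnorm_rderiv.
by have := zeta_ip_bounds x_gt0; have := energy_ge0 x_gt0; lra.
Qed.

Let two_powR_p_ge1 : 1 <= 2 `^ p.
Proof.
have one_le2 : (1 : R) <= 2 by lra.
exact: le_trans one_le2 (le1r_powR one_le2 (le_trans one_le2 p_ge2)).
Qed.

Lemma zeta_ip_le_rayleigh {a s x} : d < a -> a <= s <= x ->
  (forall y, a <= y <= x -> 0 < sqnorm y) ->
  2 * ip (zeta x) (u x) <= 2 * (2 `^ p - 1) * rayleigh a * sqnorm s.
Proof.
move=> da /andP[a_s sx] g_gt0; have ds := lt_le_trans da a_s.
have x_gt0 := lt_trans d_gt0 (lt_le_trans ds sx).
have ax := le_trans a_s sx; have gx_gt0 : 0 < sqnorm x by apply: g_gt0; rewrite ax lexx.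
have R_le : rayleigh x <= rayleigh a := rayleigh_nonincreasing da ax g_gt0.
have Rg_le : rayleigh x * sqnorm x <= rayleigh a * sqnorm s.
  apply: ler_pM R_le (sqnorm_nonincreasing ds sx); last exact: ltW.
  by apply: divr_ge0; [exact: energy_ge0 | exact: ltW].
have /andP[_ P_le] := zeta_ip_bounds x_gt0.
rewrite -[energy x](divfK (lt0r_neq0 gx_gt0)) -/(rayleigh x) in P_le.
have M_ge0 : 0 <= 2 `^ p - 1 by rewrite subr_ge0.
by have := ler_wpM2l M_ge0 Rg_le; lra.
Qed.

(* On [[s, T]] the decay rate of [sqnorm] is at most [K * sqnorm s]; for
   [T - s < 1 / K] this keeps [sqnorm T] away from [0]. *)
Lemma sqnorm_gt0_at_end {a T} : d < a -> a < T ->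
  (forall x, a <= x < T -> 0 < sqnorm x) -> 0 < sqnorm T.
Proof.
move=> da aT g_gt0; have a_gt0 := lt_trans d_gt0 da.
have ga_gt0 : 0 < sqnorm a by apply: g_gt0; rewrite lexx aT.
pose K := 2 * (2 `^ p - 1) * rayleigh a.
have K_ge0 : 0 <= K.
  apply: mulr_ge0; first by rewrite mulr_ge0 // subr_ge0.
  exact: divr_ge0 (energy_ge0 a_gt0) (ltW ga_gt0).
pose s := Num.max a (T - (K + 1)^-1).
have a_s : a <= s by rewrite le_max lexx.
have sT : s < T by rewrite gt_max aT /= ltrBlDr ltrDl invr_gt0; lra.
have Ts_le : T - s <= (K + 1)^-1.
  have : T - (K + 1)^-1 <= s by rewrite le_max lexx orbT.
  lra.
have gs_gt0 : 0 < sqnorm s by apply: g_gt0; rewrite a_s sT.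
suff : sqnorm s + - (K * sqnorm s) * (T - s) <= sqnorm T.
  have : K * (T - s) < 1.
    apply: le_lt_trans (ler_wpM2l K_ge0 Ts_le) _.
    by rewrite ltr_pdivrMr ?mulr1; lra.
  by rewrite -(ltr_pM2l gs_gt0) mulr1; lra.
have ds := lt_le_trans da a_s.
apply: right_deriv_ge_ge (ltW sT) _ _ => [x /andP[sx _]|x /andP[sx xT]].
  by apply: sqnorm_continuous; exact: lt_le_trans ds sx.
exists (- (2 * ip (zeta x) (u x))); first exact/sqnorm_rderiv/(lt_le_trans ds sx).
rewrite lerN2; apply: zeta_ip_le_rayleigh => //; first by rewrite a_s sx.
by move=> y /andP[ay yx]; rewrite g_gt0 // ay (le_lt_trans yx).
Qed.

Lemma u_neq0_after {a} : d < a -> u a != 0 -> forall t, a <= t -> u t != 0.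
Proof.
move=> da ua_neq0 t a_t; apply/negP => /eqP ut0.
have [|||T [aT gT0 g_neq0]] := @first_root _ sqnorm a t _ _ a_t.
- by move=> x ax; apply: sqnorm_continuous; exact: lt_le_trans ax.
- by rewrite gt_eqF // sqnorm_gt0.
- by rewrite /sqnorm ut0 normr0 expr0n.
suff : 0 < sqnorm T by rewrite gT0 ltxx.
apply: sqnorm_gt0_at_end da aT _ => x /g_neq0 gx_neq0.
by rewrite lt0r gx_neq0 /sqnorm sqr_ge0.
Qed.
End gradient_flow.
End abs_homogeneous_convex.
End inner_product.

Theorem theorem1 (R : realType) (H : completeNormedModType R)
    (ip : H -> H -> R) (p : R) (J : H -> \bar R) (f : H) (u : R -> H) :
  is_inner_product ip ->
  2 <= p ->
  convex_fun J ->
  lower_semicontinuous J ->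
  proper_fun J ->
  dense_eff_dom J ->
  abs_homogeneous p J ->
  (0 < lambda1 ip p J)%E ->
  H0 ip J f ->
  gradient_flow ip J f u ->
  extinction_time u = +oo%E.
Proof.
move=> ip_inner p_ge2 J_convex _ J_proper _ J_hom _ [_ f_neq0] [u0 u_cont u_lip u_sol].
have u_rderiv t : 0 < t ->
    exists z, subdiff ip J (u t) z /\ h^-1 *: (u (t + h) - u t) @[h --> 0^'+] --> - z.
  by move=> /u_sol[z [[zJ _] z_lim]]; exists z.
have u0_neq0 : u 0 != 0 by rewrite u0.
have [del [/andP[del_gt0 _] u_del]] :=
  near_at_right0_ex (near_at_right0_neq0 u u_cont u0_neq0) _ ltr01.
have d_gt0 : 0 < del / 2 by rewrite divr_gt0.
have d_del : del / 2 < del by lra.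
have [L u_lip_d] := u_lip _ d_gt0.
have u_neq0 :=
  u_neq0_after ip_inner p_ge2 J_convex J_proper J_hom u_rderiv d_gt0 u_lip_d d_del u_del.
rewrite /extinction_time (_ : [set T | _] = set0) ?image_set0 ?ereal_inf0 //.
apply/seteqP; split => // T [_ uT0].
have del_le : del <= Num.max T del by rewrite le_max lexx orbT.
by have := u_neq0 _ del_le; rewrite uT0 ?eqxx // le_max lexx.
Qed.
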